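(* Let $x, y, a, b$ be positive integers. Then there exists an amicable pair of lattice parallelograms, one with side lengths $x$ and $y$ and the other with side lengths $a$ and $b$, if and only if both $x^2y^2 - 4(a+b)^2$ and $a^2b^2 - 4(x+y)^2$ are squares of integers (zero allowed).
   Context: A lattice parallelogram is a parallelogram all of whose vertices lie on the integer lattice $\mathbb{Z}^2$. Two polygons form an amicable pair if the area of each equals the perimeter of the other (the two polygons are not required to be distinct). A parallelogram ''with side lengths $x$ and $y$'' has two sides of length $x$ and two sides of length $y$. *)

From Stdlib Require Import Reals ZArith.
Open Scope R_scope.

(* A lattice parallelogram: vertices p, p+u, p+u+v, p+v with p, u, v in Z^2,
   non-degenerate (u, v linearly independent). *)
Record lattice_parallelogram := LPar {
  lp_base : Z * Z;
  lp_u : Z * Z;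
  lp_v : Z * Z;
}.

Definition zdet (u v : Z * Z) : Z := (fst u * snd v - snd u * fst v)%Z.

Definition nondegenerate (P : lattice_parallelogram) : Prop :=
  zdet (lp_u P) (lp_v P) <> 0%Z.

Definition vlen (u : Z * Z) : R := sqrt (IZR (fst u * fst u + snd u * snd u)).

Definition area (P : lattice_parallelogram) : R := Rabs (IZR (zdet (lp_u P) (lp_v P))).

Definition perimeter (P : lattice_parallelogram) : R :=
  2 * (vlen (lp_u P) + vlen (lp_v P)).

Definition has_side_lengths (P : lattice_parallelogram) (x y : R) : Prop :=
  (vlen (lp_u P) = x /\ vlen (lp_v P) = y) \/ (vlen (lp_u P) = y /\ vlen (lp_v P) = x).

Definition amicable (P Q : lattice_parallelogram) : Prop :=
  area P = perimeter Q /\ area Q = perimeter P.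

Definition is_Zsquare (n : Z) : Prop := exists s : Z, n = (s * s)%Z.

From Stdlib Require Import Reals ZArith Lia Psatz.

(* By Lagrange's identity |u|^2 |v|^2 - det(u, v)^2 = (u . v)^2, a lattice
   parallelogram with side lengths x, y and area A forces x^2 y^2 - A^2 to be a
   square; amicability makes A the perimeter of the partner, 2(a + b).
   Conversely, if s^2 + A^2 = x^2 y^2, factor the Gaussian integer s + A i as
   u v with |u| = x and |v| = y; the vectors conj u and v then have lengths x, y
   and determinant Im (u v) = A.  The factorisation comes from the Euclidean
   algorithm in Z[i]: if N z divides N w, write w = d w1 and z = d z1 with
   d = gcd(w, z); then z1 divides w1 conj(w1) and is coprime to w1, so
   conj w1 = z1 c and w = (d conj z1) conj c with N (d conj z1) = N z. *)

Open Scope Z_scope.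

Definition gadd (p q : Z * Z) : Z * Z := (fst p + fst q, snd p + snd q).
Definition gmul (p q : Z * Z) : Z * Z :=
  (fst p * fst q - snd p * snd q, fst p * snd q + snd p * fst q).
Definition gconj (p : Z * Z) : Z * Z := (fst p, - snd p).
Definition gnorm (p : Z * Z) : Z := fst p * fst p + snd p * snd p.
Definition gdvd (d w : Z * Z) : Prop := exists q, w = gmul d q.

Ltac gauss_ring :=
  repeat match goal with p : (Z * Z)%type |- _ => destruct p end;
  unfold gadd, gmul, gconj, gnorm in *; cbn [fst snd] in *;
  try match goal with |- (_, _) = (_, _) => f_equal end; ring.

Lemma gnorm_ge0 p : 0 <= gnorm p.
Proof. destruct p; unfold gnorm; cbn; nia. Qed.

Lemma gnorm_eq0 p : gnorm p = 0 -> p = (0, 0).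
Proof. destruct p; unfold gnorm; cbn; intros; f_equal; nia. Qed.

Lemma gnorm_gt0 p : p <> (0, 0) -> 0 < gnorm p.
Proof.
  intros Hp. pose proof (gnorm_ge0 p).
  destruct (Z.eq_dec (gnorm p) 0) as [E | E]; [now apply gnorm_eq0 in E | lia].
Qed.

Lemma gnorm_mul p q : gnorm (gmul p q) = gnorm p * gnorm q.
Proof. gauss_ring. Qed.

Lemma gnorm_conj p : gnorm (gconj p) = gnorm p.
Proof. gauss_ring. Qed.

Lemma gconjK p : gconj (gconj p) = p.
Proof. gauss_ring. Qed.

Lemma gconj_mul p q : gconj (gmul p q) = gmul (gconj p) (gconj q).
Proof. gauss_ring. Qed.

Lemma gmulI d p q : d <> (0, 0) -> gmul d p = gmul d q -> p = q.
Proof.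
  intros Hd E. apply (f_equal (gmul (gconj d))) in E.
  assert (Hnorm : forall r, gmul (gconj d) (gmul d r) = (gnorm d * fst r, gnorm d * snd r))
    by (intros; gauss_ring).
  rewrite !Hnorm in E. injection E as E1 E2.
  pose proof (gnorm_gt0 d Hd).
  destruct p, q; cbn in *; f_equal; eapply Z.mul_reg_l; eauto; lia.
Qed.

Lemma Z_round_div A n : 0 < n -> exists q, - n <= 2 * (A - n * q) <= n.
Proof.
  intros Hn. exists ((2 * A + n) / (2 * n)).
  pose proof (Z.div_mod (2 * A + n) (2 * n) ltac:(lia)).
  pose proof (Z.mod_pos_bound (2 * A + n) (2 * n) ltac:(lia)).
  lia.
Qed.

(* The quotient rounds w conj(z) / N z componentwise, so
   N r * N z = N (r conj z) <= N z ^ 2 / 2. *)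
Lemma gdiv_euclid w z : z <> (0, 0) ->
  exists q r, w = gadd (gmul q z) r /\ gnorm r < gnorm z.
Proof.
  intros Hz. pose proof (gnorm_gt0 z Hz) as Hn.
  set (wz := gmul w (gconj z)).
  destruct (Z_round_div (fst wz) (gnorm z) Hn) as [q1 Hq1].
  destruct (Z_round_div (snd wz) (gnorm z) Hn) as [q2 Hq2].
  set (r := (fst w - fst (gmul (q1, q2) z), snd w - snd (gmul (q1, q2) z))).
  exists (q1, q2), r. split; [subst r; gauss_ring |].
  set (n := gnorm z) in *.
  assert (Hrz : gmul r (gconj z) = (fst wz - n * q1, snd wz - n * q2))
    by (subst r wz n; gauss_ring).
  assert (Hnrz : gnorm r * n
                 = (fst wz - n * q1) * (fst wz - n * q1) + (snd wz - n * q2) * (snd wz - n * q2)).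
  { change (_ + _) with (gnorm (fst wz - n * q1, snd wz - n * q2)).
    rewrite <- Hrz, gnorm_mul, gnorm_conj. reflexivity. }
  assert (H : (2 * gnorm r) * n <= n * n) by nia.
  apply Z.mul_le_mono_pos_r in H; lia.
Qed.

Lemma gdvd_add d p q : gdvd d p -> gdvd d q -> gdvd d (gadd p q).
Proof. intros [p' ->] [q' ->]. exists (gadd p' q'). gauss_ring. Qed.

Lemma gdvd_mull d c p : gdvd d p -> gdvd d (gmul c p).
Proof. intros [p' ->]. exists (gmul c p'). gauss_ring. Qed.

Lemma gbezout w z :
  exists d al be, gdvd d w /\ gdvd d z /\ d = gadd (gmul al w) (gmul be z).
Proof.
  remember (Z.to_nat (gnorm z)) as n eqn:Hn. revert w z Hn.
  induction n as [n IH] using lt_wf_ind. intros w z Hn.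
  destruct (Z.eq_dec (gnorm z) 0) as [E | E].
  - apply gnorm_eq0 in E. subst z. exists w, (1, 0), (0, 0). repeat split.
    + exists (1, 0). gauss_ring.
    + exists (0, 0). gauss_ring.
    + gauss_ring.
  - assert (Hz : z <> (0, 0)) by (intros ->; apply E; reflexivity).
    destruct (gdiv_euclid w z Hz) as [q [r [Hw Hr]]].
    pose proof (gnorm_ge0 r).
    destruct (IH (Z.to_nat (gnorm r)) ltac:(lia) z r eq_refl)
      as [d [al [be [Hdz [Hdr Hd]]]]].
    exists d, be, (gadd al (gmul (-1, 0) (gmul be q))). repeat split; auto.
    + rewrite Hw. apply gdvd_add; [apply gdvd_mull |]; assumption.
    + rewrite Hd, Hw. gauss_ring.
Qed.

Lemma gnorm_dvd_factor w z k : z <> (0, 0) -> gnorm w = gnorm z * k ->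
  exists u v, w = gmul u v /\ gnorm u = gnorm z.
Proof.
  intros Hz Hk.
  destruct (gbezout w z) as [d [al [be [[w1 Hw] [[z1 Hz1] Hd]]]]].
  assert (Hd0 : d <> (0, 0)) by (intros ->; apply Hz; rewrite Hz1; gauss_ring).
  assert (Hcoprime : gadd (gmul al w1) (gmul be z1) = (1, 0)).
  { apply (gmulI d); [assumption |].
    transitivity d; [| gauss_ring].
    rewrite Hd at 2. rewrite Hw, Hz1. gauss_ring. }
  assert (Hk1 : gnorm w1 = gnorm z1 * k).
  { rewrite Hw, Hz1, !gnorm_mul in Hk. pose proof (gnorm_gt0 d Hd0). nia. }
  set (c := gadd (gmul al (gmul (gconj z1) (k, 0))) (gmul be (gconj w1))).
  assert (Hc : gconj w1 = gmul z1 c).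
  { transitivity (gmul (gadd (gmul al w1) (gmul be z1)) (gconj w1));
      [rewrite Hcoprime; gauss_ring |].
    transitivity (gadd (gmul al (gnorm w1, 0)) (gmul z1 (gmul be (gconj w1))));
      [gauss_ring |].
    rewrite Hk1. subst c. gauss_ring. }
  exists (gmul d (gconj z1)), (gconj c). split.
  - rewrite Hw, <- (gconjK w1), Hc, gconj_mul. gauss_ring.
  - rewrite Hz1, !gnorm_mul, gnorm_conj. reflexivity.
Qed.

Lemma vectors_of_sum_two_squares x y s t : x <> 0 ->
  s * s + t * t = x * x * (y * y) ->
  exists u v, gnorm u = x * x /\ gnorm v = y * y /\ zdet u v = t.
Proof.
  intros Hx Hst.
  destruct (gnorm_dvd_factor (s, t) (x, 0) (y * y)) as [u [v [Huv Hu]]].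
  - intros E. injection E as E. contradiction.
  - unfold gnorm; cbn. lia.
  - assert (Hv : gnorm v = y * y).
    { assert (E : gnorm (s, t) = gnorm u * gnorm v) by (rewrite Huv; apply gnorm_mul).
      rewrite Hu in E. unfold gnorm in E |- *; cbn in *.
      apply (Z.mul_reg_l _ _ (x * x)); nia. }
    exists (gconj u), v. rewrite gnorm_conj. split; [rewrite Hu; unfold gnorm; cbn; ring | split; [exact Hv |]].
    change t with (snd (s, t)). rewrite Huv. unfold zdet. gauss_ring.
Qed.

Lemma lagrange_identity u v :
  gnorm u * gnorm v - zdet u v ^ 2 = (fst u * fst v + snd u * snd v) ^ 2.
Proof. unfold zdet. gauss_ring. Qed.

Lemma vlen_eq_IZR p x : 0 <= x -> (vlen p = IZR x)%R <-> gnorm p = x * x.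
Proof.
  intros Hx. unfold vlen. fold (gnorm p). split.
  - intros H. apply eq_IZR.
    rewrite <- (sqrt_sqrt (IZR (gnorm p))), H, mult_IZR; [reflexivity |].
    apply IZR_le, gnorm_ge0.
  - intros ->. rewrite mult_IZR. apply sqrt_square, IZR_le, Hx.
Qed.

Lemma perimeter_side_lengths P x y :
  has_side_lengths P (IZR x) (IZR y) -> perimeter P = IZR (2 * (x + y)).
Proof.
  unfold perimeter. rewrite mult_IZR, plus_IZR.
  intros [[-> ->] | [-> ->]]; ring.
Qed.

Lemma area_IZR P c : area P = IZR c -> zdet (lp_u P) (lp_v P) ^ 2 = c ^ 2.
Proof.
  unfold area. rewrite Rabs_Zabs. intros H. apply eq_IZR in H.
  rewrite <- H, !Z.pow_2_r, Z.abs_square. reflexivity.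
Qed.

Lemma is_Zsquare_sides_area P x y c : 0 <= x -> 0 <= y ->
  has_side_lengths P (IZR x) (IZR y) -> area P = IZR c ->
  is_Zsquare (x ^ 2 * y ^ 2 - c ^ 2).
Proof.
  intros Hx Hy HP HA. destruct P as [p u v]. apply area_IZR in HA. cbn in *.
  exists (fst u * fst v + snd u * snd v).
  rewrite <- HA, Z.mul_comm, <- Z.pow_2_r, <- lagrange_identity.
  destruct HP as [[Hu Hv] | [Hu Hv]]; cbn in Hu, Hv;
    apply vlen_eq_IZR in Hu, Hv; auto; rewrite Hu, Hv; ring.
Qed.

Lemma exists_parallelogram_sides_area x y c : 0 < x -> 0 < y -> 0 < c ->
  is_Zsquare (x ^ 2 * y ^ 2 - c ^ 2) ->
  exists P, nondegenerate P /\ has_side_lengths P (IZR x) (IZR y) /\ area P = IZR c.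
Proof.
  intros Hx Hy Hc [s Hs].
  destruct (vectors_of_sum_two_squares x y s c ltac:(lia) ltac:(lia))
    as [u [v [Hu [Hv Huv]]]].
  exists (LPar (0, 0) u v). unfold nondegenerate, has_side_lengths, area. cbn.
  rewrite Huv, Rabs_Zabs, Z.abs_eq by lia.
  rewrite !vlen_eq_IZR by lia. repeat split; auto; lia.
Qed.

Theorem theorem1 (x y a b : Z) (hx : (0 < x)%Z) (hy : (0 < y)%Z)
  (ha : (0 < a)%Z) (hb : (0 < b)%Z) :
  (exists P Q : lattice_parallelogram,
      nondegenerate P /\ nondegenerate Q /\
      has_side_lengths P (IZR x) (IZR y) /\ has_side_lengths Q (IZR a) (IZR b) /\
      amicable P Q)
  <->
  (is_Zsquare (x ^ 2 * y ^ 2 - 4 * (a + b) ^ 2)%Z /\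
   is_Zsquare (a ^ 2 * b ^ 2 - 4 * (x + y) ^ 2)%Z).
Proof.
  replace (4 * (a + b) ^ 2) with ((2 * (a + b)) ^ 2) by ring.
  replace (4 * (x + y) ^ 2) with ((2 * (x + y)) ^ 2) by ring.
  split.
  - intros [P [Q [_ [_ [HP [HQ [HPQ HQP]]]]]]].
    rewrite (perimeter_side_lengths Q a b HQ) in HPQ.
    rewrite (perimeter_side_lengths P x y HP) in HQP.
    split; eapply is_Zsquare_sides_area; eauto; lia.
  - intros [HPsq HQsq].
    destruct (exists_parallelogram_sides_area x y (2 * (a + b)) hx hy ltac:(lia) HPsq)
      as [P [HPn [HP HPA]]].
    destruct (exists_parallelogram_sides_area a b (2 * (x + y)) ha hb ltac:(lia) HQsq)
      as [Q [HQn [HQ HQA]]].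
    exists P, Q. unfold amicable.
    rewrite (perimeter_side_lengths P x y HP), (perimeter_side_lengths Q a b HQ).
    tauto.
Qed.
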